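(* Let $(X,G)$ be a Mustafa–Sims metric space which is perfect, i.e. for each $x\in X$ there is a sequence $(x_n)$ in $X\setminus\{x\}$ that $G$-converges to $x$. Then $G$ is symmetric in the sense that $G(x,y,y)=G(x,x,y)$ for all $x,y\in X$.
   Context: A Mustafa–Sims metric on $X$ is a map $G:X^3\to[0,\infty)$ such that: $G$ is invariant under all permutations of its arguments and $G(x,x,x)=0$; $G(x,x,y)=0$ implies $x=y$; $G(x,x,y)\le G(x,y,z)$ whenever $y\ne z$; and $G(x,y,z)\le G(x,u,u)+G(u,y,z)$ for all $x,y,z,u$. A sequence $(x_n)$ $G$-converges to $x$ if $G(x_m,x_n,x)\to0$ as $m,n\to\infty$. *)

From Stdlib Require Import Reals.
Open Scope R_scope.

Definition is_G_metric {X : Type} (G : X -> X -> X -> R) : Prop :=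
  (forall x y z, 0 <= G x y z) /\
  (forall x y z, G x y z = G x z y /\ G x y z = G y x z
                 /\ G x y z = G y z x /\ G x y z = G z x y
                 /\ G x y z = G z y x) /\
  (forall x, G x x x = 0) /\
  (forall x y, G x x y = 0 -> x = y) /\
  (forall x y z, y <> z -> G x x y <= G x y z) /\
  (forall x y z u, G x y z <= G x u u + G u y z).

Definition G_converges {X : Type} (G : X -> X -> X -> R)
  (s : nat -> X) (x : X) : Prop :=
  forall eps, 0 < eps ->
    exists N : nat, forall m n : nat, (N <= m)%nat -> (N <= n)%nat ->
      G (s m) (s n) x < eps.

Definition G_perfect {X : Type} (G : X -> X -> X -> R) : Prop :=
  forall x : X, exists s : nat -> X,
    (forall n, s n <> x) /\ G_converges G s x.

(* If t is G-close to x and t <> x, the axiom G(y,y,t) <= G(y,t,x) lets one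
   route G(x,y,y) through t at the price of 3 G(t,t,x):
   G(x,y,y) <= G(x,t,t) + G(y,y,t) <= G(x,t,t) + G(t,x,x) + G(x,x,y),
   with G(t,x,x) <= 2 G(x,t,t).  Perfectness makes G(t,t,x) arbitrarily small,
   so G(x,y,y) <= G(x,x,y), and exchanging x and y gives the reverse. *)

From Stdlib Require Import Reals Lra.
Open Scope R_scope.

Section GMetric.

Variables (X : Type) (G : X -> X -> X -> R).
Hypothesis HG : is_G_metric G.

Lemma G_swap12 (x y z : X) : G x y z = G y x z.
Proof. now destruct HG as [_ [Hperm _]]; destruct (Hperm x y z) as [_ [? _]]. Qed.

Lemma G_swap23 (x y z : X) : G x y z = G x z y.
Proof. now destruct HG as [_ [Hperm _]]; destruct (Hperm x y z). Qed.

Lemma G_swap13 (x y z : X) : G x y z = G z y x.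
Proof. now destruct HG as [_ [Hperm _]]; destruct (Hperm x y z) as [_ [_ [_ [_ ?]]]]. Qed.

Lemma G_xxy_le_xyz (x y z : X) : y <> z -> G x x y <= G x y z.
Proof. now destruct HG as [_ [_ [_ [_ [Hle _]]]]]; apply Hle. Qed.

Lemma G_rectangle (x y z u : X) : G x y z <= G x u u + G u y z.
Proof. now destruct HG as [_ [_ [_ [_ [_ Hrect]]]]]. Qed.

Lemma G_xxy_le_2xyy (x y : X) : G x x y <= 2 * G x y y.
Proof.
pose proof (G_rectangle x x y y).
rewrite (G_swap12 y x y) in *; lra.
Qed.

Lemma G_xyy_le_through (x y t : X) :
  t <> x -> G x y y <= 3 * G t t x + G x x y.
Proof.
intros Htx.
pose proof (G_rectangle x y y t) as Hxt.
pose proof (G_xxy_le_xyz y t x Htx) as Hyt.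
pose proof (G_rectangle t x y x) as Htxy.
pose proof (G_xxy_le_2xyy x t) as Htx2.
rewrite (G_swap13 t y y), (G_swap12 y t x), (G_swap23 t y x) in *.
rewrite (G_swap13 t x x) in Htxy.
rewrite (G_swap13 x t t) in Hxt, Htx2.
lra.
Qed.

Lemma G_perfect_close_point : G_perfect G ->
  forall (x : X) (eps : R), 0 < eps -> exists t, t <> x /\ G t t x < eps.
Proof.
intros Hperf x eps Heps.
destruct (Hperf x) as [s [Hsx Hconv]].
destruct (Hconv eps Heps) as [N HN].
exists (s N); split; [apply Hsx | now apply HN].
Qed.

Lemma G_perfect_xyy_le_xxy : G_perfect G -> forall x y : X, G x y y <= G x x y.
Proof.
intros Hperf x y.
apply le_epsilon; intros eps Heps.
destruct (G_perfect_close_point Hperf x (eps / 3)) as [t [Htx Ht]]; [lra |].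
pose proof (G_xyy_le_through x y t Htx); lra.
Qed.

End GMetric.

Theorem proposition7 (X : Type) (G : X -> X -> X -> R)
  (HG : is_G_metric G) (Hperf : G_perfect G) :
  forall x y : X, G x y y = G x x y.
Proof.
intros x y.
pose proof (G_perfect_xyy_le_xxy X G HG Hperf x y) as Hxy.
pose proof (G_perfect_xyy_le_xxy X G HG Hperf y x) as Hyx.
rewrite (G_swap13 X G HG y x x), (G_swap13 X G HG y y x) in Hyx.
lra.
Qed.
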